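(* Let $\epsilon>0$ and let $C,D$ be symmetric positive-definite $n\times n$ matrices. Then $$\frac4\epsilon D^{1/2}\left(I+\left(I+\frac{16}{\epsilon^2}D^{1/2}CD^{1/2}\right)^{1/2}\right)^{-1}D^{1/2}=I-\frac\epsilon4C^{-1/2}\left(I+\frac4\epsilon C-\left(I+\frac{16}{\epsilon^2}C^{1/2}DC^{1/2}\right)^{1/2}\right)C^{-1/2}.$$
   Context: Square roots of symmetric positive-definite matrices are the principal (symmetric positive-definite) square roots. *)

From HB Require Import structures.
From mathcomp Require Import all_boot all_order all_algebra.
From mathcomp Require Import reals.
From Stdlib Require Import ClassicalEpsilon.
Set Implicit Arguments. Unset Strict Implicit. Unset Printing Implicit Defensive.
Import Order.TTheory GRing.Theory Num.Theory.
Local Open Scope ring_scope.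

Definition symmetricmx (R : realType) (n : nat) (A : 'M[R]_n) : Prop :=
  A^T = A.

Definition spd (R : realType) (n : nat) (A : 'M[R]_n) : Prop :=
  symmetricmx A /\ forall x : 'cV[R]_n, x != 0 -> 0 < (x^T *m A *m x) 0 0.

(* Principal square root: the (unique) symmetric positive-definite S with
   S * S = A; chosen by Hilbert's epsilon (defaults to 0 if none exists). *)
Definition sqrtm (R : realType) (n : nat) (A : 'M[R]_n) : 'M[R]_n :=
  epsilon (inhabits 0) (fun S : 'M[R]_n => spd S /\ S *m S = A).

From Pilot Require Import Defs.
From HB Require Import structures.
From mathcomp Require Import all_boot all_order all_algebra.
From mathcomp Require Import reals complex.
From Stdlib Require Import ClassicalEpsilon.
Import Order.TTheory GRing.Theory Num.Theory.
Local Open Scope ring_scope.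
Local Open Scope sesquilinear_scope.

(* Put P = D^(1/2), Q = C^(1/2), M = P Q and t = 4/eps, so that P C P = M M^T
   and Q D Q = M^T M.  For X = (1 + t^2 M M^T)^(1/2) and Y = (1 + t^2 M^T M)^(1/2)
   the matrix Z = X M - M Y solves X Z + Z Y = 0, which forces Z = 0 since X and Y
   are positive definite (take the trace of Z^T (X Z + Z Y)).  From this
   push-through identity, (1 + X)^-1 M = M (1 + Y)^-1, so conjugating the claim by
   Q turns its left side into t M^T M (1 + Y)^-1 and its right side into
   t^-1 (Y - 1); these agree because Y^2 - 1 = t^2 M^T M.

   Principal square roots exist: a unitary diagonalisation V diag(d) U of the
   complexified matrix gives the square root V diag(sqrt d) U, which is real
   because complex conjugation yields a second diagonalisation of the same real
   matrix and the diagonal functional calculus does not depend on the choice. *)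

Section PositiveDefinite.
Context {R : realType} {n : nat}.
Implicit Types (X Y Z M : 'M[R]_n) (x : 'cV[R]_n).

Definition qform X x : R := (x^T *m X *m x) 0 0.

Lemma qformD X Y x : qform (X + Y) x = qform X x + qform Y x.
Proof. by rewrite /qform mulmxDr mulmxDl mxE. Qed.

Lemma qformZ c X x : qform (c *: X) x = c * qform X x.
Proof. by rewrite /qform -scalemxAr -scalemxAl mxE. Qed.

Lemma qform1E x : qform 1%:M x = \sum_i x i 0 ^+ 2.
Proof. by rewrite /qform mulmx1 mxE; apply: eq_bigr => i _; rewrite !mxE expr2. Qed.

Lemma qform1_gt0 x : x != 0 -> 0 < qform 1%:M x.
Proof.
case/cV0Pn=> i xi_neq0.
rewrite qform1E (bigD1 i) //= ltr_pwDl ?sumr_ge0 // => [|j _]; last exact: sqr_ge0.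
by rewrite lt0r sqr_ge0 sqrf_eq0 xi_neq0.
Qed.

Lemma qform_mulmx_tr_ge0 M x : 0 <= qform (M *m M^T) x.
Proof.
have -> : qform (M *m M^T) x = qform 1%:M (M^T *m x).
  by rewrite /qform mulmx1 trmx_mul trmxK !mulmxA.
by rewrite qform1E sumr_ge0 // => i _; exact: sqr_ge0.
Qed.

Lemma spd_qform_ge0 X x : spd X -> 0 <= qform X x.
Proof.
case=> _ X_pos; have [->|x_neq0] := eqVneq x 0; last exact/ltW/X_pos.
by rewrite /qform mulmx0 mxE.
Qed.

Lemma spd_qform_eq0 {X x} : spd X -> qform X x = 0 -> x = 0.
Proof.
case=> _ X_pos qx0; have [//|x_neq0] := eqVneq x 0.
by have := X_pos x x_neq0; rewrite -/(qform X x) qx0 ltxx.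
Qed.

Lemma spd_eigenvalue_gt0 {X r} : spd X -> eigenvalue X r -> 0 < r.
Proof.
move=> X_spd /eigenvalueP [v vX v_neq0].
have vT_neq0 : v^T != 0 by rewrite trmx_eq0.
have qvE : qform X v^T = r * qform 1%:M v^T.
  by rewrite /qform trmxK mulmx1 vX -scalemxAl mxE.
have : 0 < qform X v^T by case: X_spd => _; apply.
by rewrite qvE pmulr_lgt0 ?qform1_gt0.
Qed.

Lemma spd_unitmx {X} : spd X -> X \in unitmx.
Proof.
move=> X_spd; rewrite unitmxE unitfE; apply/negP => /det0P [v v_neq0 vX].
have /(spd_eigenvalue_gt0 X_spd) : eigenvalue X 0.
  by apply/eigenvalueP; exists v; rewrite ?vX ?scale0r.
by rewrite ltxx.
Qed.

Lemma spd_1D_psd {Y} : Y^T = Y -> (forall x, 0 <= qform Y x) -> spd (1%:M + Y).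
Proof.
move=> Y_sym Y_psd; split; first by rewrite /Defs.symmetricmx linearD /= trmx1 Y_sym.
by move=> x x_neq0; rewrite -/(qform _ x) qformD ltr_pwDl ?qform1_gt0.
Qed.

Lemma spd_1D {X} : spd X -> spd (1%:M + X).
Proof. by move=> X_spd; apply: spd_1D_psd => [|x]; [case: X_spd | exact: spd_qform_ge0]. Qed.

Lemma mxtrace_qform X Z : \tr (Z^T *m X *m Z) = \sum_j qform X (col j Z).
Proof.
apply: eq_bigr => j _; rewrite /qform tr_col -row_mul !mxE.
by apply: eq_bigr => k _; rewrite !mxE.
Qed.

Lemma spd_sylvester_eq0 {X Y Z} : spd X -> spd Y -> X *m Z + Z *m Y = 0 -> Z = 0.
Proof.
move=> X_spd Y_spd XZY0.
have traces0 : \tr (Z^T *m X *m Z) + \tr (Z^T^T *m Y *m Z^T) = 0.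
  rewrite trmxK [\tr (Z *m Y *m Z^T)]mxtrace_mulC -mxtraceD.
  by rewrite -mulmxA -mulmxDr XZY0 mulmx0 mxtrace0.
have sum_ge0 W V : spd W -> 0 <= \sum_j qform W (col j V).
  by move=> W_spd; apply: sumr_ge0 => j _; exact: spd_qform_ge0.
move: traces0; rewrite !mxtrace_qform => /eqP.
rewrite paddr_eq0 ?sum_ge0 // => /andP [/eqP sumX0 _].
have colZ0 j : col j Z = 0.
  apply: (spd_qform_eq0 X_spd).
  by apply: (psumr_eq0P _ sumX0) => // k _; exact: spd_qform_ge0.
apply/matrixP => i j.
by have := congr1 (fun v : 'cV_n => v i 0) (colZ0 j); rewrite !mxE.
Qed.

End PositiveDefinite.

Lemma diag_mx_comm_map {F : idomainType} {n} {W : 'M[F]_n} {d : 'rV[F]_n} (g : F -> F) :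
  W *m diag_mx d = diag_mx d *m W ->
  W *m diag_mx (map_mx g d) = diag_mx (map_mx g d) *m W.
Proof.
move=> /matrixP Wd; apply/matrixP => i j; have := Wd i j.
rewrite !mul_mx_diag !mul_diag_mx !mxE => Wd_ij.
have [->|Wij_neq0] := eqVneq (W i j) 0; first by rewrite mulr0 mul0r.
suff -> : d 0 j = d 0 i by rewrite mulrC.
by apply: (mulfI Wij_neq0); rewrite Wd_ij mulrC.
Qed.

Lemma eq_conj_diag_map {F : fieldType} {n} {U1 V1 U2 V2 : 'M[F]_n} {d : 'rV[F]_n}
    {g : F -> F} :
  U1 *m V1 = 1%:M -> U2 *m V2 = 1%:M ->
  V1 *m diag_mx d *m U1 = V2 *m diag_mx d *m U2 ->
  V1 *m diag_mx (map_mx g d) *m U1 = V2 *m diag_mx (map_mx g d) *m U2.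
Proof.
move=> UV1 UV2 eq_d; set W := U2 *m V1.
have W_comm : W *m diag_mx d = diag_mx d *m W.
  have := congr1 (fun M => U2 *m M *m V1) eq_d.
  by rewrite !mulmxA UV2 mul1mx -!mulmxA UV1 mulmx1 !mulmxA.
have Wg_comm := diag_mx_comm_map g W_comm.
transitivity (V2 *m (W *m diag_mx (map_mx g d)) *m U1).
  by rewrite /W !mulmxA (mulmx1C UV2) mul1mx.
by rewrite Wg_comm /W !mulmxA -[_ *m V1 *m U1]mulmxA (mulmx1C UV1) mulmx1.
Qed.

Lemma diag_form_gt0 (C : numClosedFieldType) n (s : 'rV[C]_n) (y : 'cV[C]_n) :
  (forall i, 0 < s 0 i) -> y != 0 -> 0 < (y^t* *m diag_mx s *m y) 0 0.
Proof.
move=> s_gt0 /cV0Pn [k yk_neq0].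
have termE i : (y^t* *m diag_mx s) 0 i * y i 0 = s 0 i * (y i 0 * (y i 0)^*).
  by rewrite mul_mx_diag !mxE mulrAC mulrC [_^* * _]mulrC.
rewrite mxE (bigD1 k) //= termE ltr_pwDl //; first by rewrite mulr_gt0 ?mul_conjC_gt0.
apply: sumr_ge0 => i _; rewrite termE.
by apply: mulr_ge0; [exact: ltW | exact: mul_conjC_ge0].
Qed.

Section SqrtExistence.
Context {R : realType} {n : nat} {A : 'M[R]_n}.
Hypothesis A_spd : spd A.
Local Notation toC := (real_complex R).

Let Ac := map_mx toC A.
Let U := spectralmx Ac.
Let V := U^t*.
Let d := spectral_diag Ac.
Let r := map_mx (@complex.Re R) d.
Let s := map_mx (fun z => toC (Num.sqrt (complex.Re z))) d.
Let Sc := V *m diag_mx s *m U.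

Let conj_toC (x : R) : (toC x)^* = toC x.
Proof. exact: conjc_real. Qed.

Let conj_conjmx m p (M : 'M[R[i]]_(m, p)) : map_mx Num.conj (map_mx Num.conj M) = M.
Proof. by rewrite -map_mx_comp map_mx_id // => z; exact: conjCK. Qed.

Let conj_Ac : map_mx Num.conj Ac = Ac.
Proof. by apply/matrixP => i j; rewrite !mxE conj_toC. Qed.

Let Ac_hermitian : Ac \is hermsymmx.
Proof.
apply/is_hermitianmxP; rewrite expr0 scale1r; apply/matrixP => i j.
by case: A_spd => /matrixP A_sym _; rewrite !mxE conj_toC -A_sym mxE.
Qed.

Let UV : U *m V = 1%:M.
Proof. exact/unitarymxP/spectral_unitarymx. Qed.

Let Ac_spectral : Ac = V *m diag_mx d *m U.
Proof.
have := orthomx_spectralP (hermitian_normalmx Ac_hermitian).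
by rewrite invmx_unitary ?spectral_unitarymx.
Qed.

Let eigenvalue_d j : eigenvalue Ac (d 0 j).
Proof.
apply/eigenvalueP; exists (row j U).
  by rewrite -row_mul {1}Ac_spectral !mulmxA UV mul1mx row_mul row_diag_mx -scalemxAl -rowE.
apply: contraTneq isT => /(congr1 (mulmx^~ V)).
rewrite -row_mul UV mul0mx row1 => /matrixP/(_ 0 j).
by rewrite !mxE !eqxx => /eqP; rewrite oner_eq0.
Qed.

Let d_real j : d 0 j = toC (r 0 j).
Proof.
rewrite mxE RRe_real //.
exact: (mxOverP (hermitian_spectral_diag_real Ac_hermitian)).
Qed.

Let r_gt0 j : 0 < r 0 j.
Proof.
apply: spd_eigenvalue_gt0 A_spd _.
rewrite eigenvalue_root_char -(fmorph_root toC) map_char_poly -eigenvalue_root_char.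
by have := eigenvalue_d j; rewrite d_real.
Qed.

Let conj_s : map_mx Num.conj s = s.
Proof. by apply/matrixP => i j; rewrite !mxE conj_toC. Qed.

Let Sc_sqr : Sc *m Sc = Ac.
Proof.
have diag_s_sqr : diag_mx s *m diag_mx s = diag_mx d.
  apply/matrixP => i j; rewrite mul_diag_mx !mxE.
  case: eqP => _; rewrite ?mulr0n ?mulr0 // !mulr1n.
  have := r_gt0 i; rewrite [in RHS]d_real !mxE => Re_gt0.
  by rewrite -rmorphM /= -expr2 sqr_sqrtr ?ltW.
have -> : Sc *m Sc = V *m (diag_mx s *m (U *m V) *m diag_mx s) *m U.
  by rewrite /Sc !mulmxA.
by rewrite UV mulmx1 diag_s_sqr -Ac_spectral.
Qed.

Let conj_Sc : map_mx Num.conj Sc = Sc.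
Proof.
rewrite /Sc !map_mxM map_diag_mx conj_s /s.
apply: (eq_conj_diag_map _ UV).
  by rewrite -map_mxM UV map_mx1.
have conj_d : map_mx Num.conj d = d.
  exact/realmxC/hermitian_spectral_diag_real.
by rewrite -[in LHS]conj_d -map_diag_mx -!map_mxM -Ac_spectral conj_Ac.
Qed.

Let Sc_tr : Sc^T = Sc.
Proof.
rewrite -[RHS]conj_Sc /Sc !trmx_mul tr_diag_mx !map_mxM map_diag_mx conj_s.
by rewrite /V map_trmx trmxK conj_conjmx !mulmxA.
Qed.

Let S := map_mx (@complex.Re R) Sc.

Let toC_S : map_mx toC S = Sc.
Proof.
apply/matrixP => i j; rewrite 2!mxE; apply: RRe_real; apply/CrealP.
by have := congr1 (fun M : 'M_n => M i j) conj_Sc; rewrite mxE.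
Qed.

Let S_pos (x : 'cV[R]_n) : x != 0 -> 0 < (x^T *m S *m x) 0 0.
Proof.
move=> x_neq0; set xc := map_mx toC x.
have xc_adj : xc^t* = xc^T.
  by apply/matrixP => i j; rewrite !mxE conj_toC.
have form_toC :
    toC ((x^T *m S *m x) 0 0) = ((U *m xc)^t* *m diag_mx s *m (U *m xc)) 0 0.
  transitivity ((map_mx toC (x^T *m S *m x)) 0 0); first by rewrite [RHS]mxE.
  by rewrite !map_mxM toC_S -map_trmx trmx_mul map_mxM xc_adj /Sc !mulmxA.
rewrite -ltcR -[0%:C%C]/(toC 0) form_toC; apply: diag_form_gt0 => [j|].
  by rewrite mxE ltcR sqrtr_gt0; have := r_gt0 j; rewrite mxE.
have U_inj := can_inj (@mulKmx _ _ 1 _ (spectral_unit Ac)).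
by rewrite -[0](mulmx0 _ U) (inj_eq U_inj) map_mx_eq0.
Qed.

Lemma spd_sqrt_exists : exists S : 'M[R]_n, spd S /\ S *m S = A.
Proof.
exists S; split; last by apply: (@map_mx_inj _ _ toC); rewrite map_mxM toC_S Sc_sqr.
split; last exact: S_pos.
by apply: (@map_mx_inj _ _ toC); rewrite map_trmx toC_S Sc_tr.
Qed.

End SqrtExistence.

Lemma sqrtm_spec {R : realType} {n} {A : 'M[R]_n} :
  spd A -> spd (sqrtm A) /\ sqrtm A *m sqrtm A = A.
Proof. by move=> A_spd; exact: (epsilon_spec _ _ (spd_sqrt_exists A_spd)). Qed.

Lemma spd_1DZ_mulmx_tr {R : realType} {n} {c : R} (M : 'M[R]_n) :
  0 <= c -> spd (1%:M + c *: (M *m M^T)).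
Proof.
move=> c_ge0; apply: spd_1D_psd => [|x].
  by rewrite linearZ /= trmx_mul trmxK.
by rewrite qformZ mulr_ge0 ?qform_mulmx_tr_ge0.
Qed.

Section PushThrough.
Context {R : realType} {n : nat}.
Variables (c : R) (M : 'M[R]_n).
Hypothesis c_ge0 : 0 <= c.

Let X := sqrtm (1%:M + c *: (M *m M^T)).
Let Y := sqrtm (1%:M + c *: (M^T *m M)).

Let X_spec : spd X /\ X *m X = 1%:M + c *: (M *m M^T).
Proof. exact/sqrtm_spec/spd_1DZ_mulmx_tr. Qed.

Let Y_spec : spd Y /\ Y *m Y = 1%:M + c *: (M^T *m M).
Proof. by have := sqrtm_spec (spd_1DZ_mulmx_tr M^T c_ge0); rewrite trmxK. Qed.

Lemma sqrtm_push_through : X *m M = M *m Y.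
Proof.
have [[X_spd XX] [Y_spd YY]] := (X_spec, Y_spec).
apply/eqP; rewrite -subr_eq0; apply/eqP/(spd_sylvester_eq0 X_spd Y_spd).
rewrite mulmxBr mulmxBl mulmxA XX -[M *m Y *m Y]mulmxA YY -[X *m M *m Y]mulmxA.
rewrite addrA addrNK mulmxDl mulmxDr mul1mx mulmx1 -scalemxAl -scalemxAr !mulmxA.
by rewrite subrr.
Qed.

Lemma invmx_1D_sqrtm_push_through :
  invmx (1%:M + X) *m M = M *m invmx (1%:M + Y).
Proof.
have [[/spd_1D/spd_unitmx X1_unit _] [/spd_1D/spd_unitmx Y1_unit _]] := (X_spec, Y_spec).
have XM1 : (1%:M + X) *m M = M *m (1%:M + Y).
  by rewrite mulmxDl mulmxDr mul1mx mulmx1 sqrtm_push_through.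
by rewrite -[LHS](mulmxK Y1_unit) -[invmx _ *m M *m _]mulmxA -XM1 mulKmx.
Qed.

End PushThrough.

Lemma mulmx_invmx_1D_of_sqr {F : comUnitRingType} {n} {B Y : 'M[F]_n} :
  Y *m Y = 1%:M + B -> 1%:M + Y \in unitmx -> B *m invmx (1%:M + Y) = Y - 1%:M.
Proof.
move=> YY Y1_unit; apply: (can_inj (mulmxK Y1_unit)); rewrite mulmxKV //.
by rewrite mulmxBl mulmxDr mulmx1 mul1mx YY addrA [Y + _]addrC addrAC subrr add0r.
Qed.

Lemma conj_mulmx_inj {F : comUnitRingType} {n} {Q : 'M[F]_n} :
  Q \in unitmx -> injective (fun Z => Q *m Z *m Q).
Proof. by move=> Q_unit Z1 Z2 /= /(can_inj (mulmxK Q_unit)) /(can_inj (mulKmx Q_unit)). Qed.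

Theorem lemma1 (R : realType) (n : nat) (eps : R) (C D : 'M[R]_n) :
  0 < eps -> spd C -> spd D ->
  (4 / eps) *: (sqrtm D *m
     invmx (1%:M + sqrtm (1%:M + (16 / eps ^+ 2) *: (sqrtm D *m C *m sqrtm D)))
     *m sqrtm D)
  = 1%:M - (eps / 4) *: (invmx (sqrtm C) *m
       (1%:M + (4 / eps) *: C
          - sqrtm (1%:M + (16 / eps ^+ 2) *: (sqrtm C *m D *m sqrtm C)))
       *m invmx (sqrtm C)).
Proof.
move=> eps_gt0 C_spd D_spd.
have [[[P_sym _] PP] [Q_spd QQ]] := (sqrtm_spec D_spd, sqrtm_spec C_spd).
have [[Q_sym _] Q_unit] := (Q_spd, spd_unitmx Q_spd).
set P := sqrtm D in P_sym PP *; set Q := sqrtm C in Q_sym QQ Q_unit *.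
set t := 4 / eps; set M := P *m Q.
have t_neq0 : t != 0 by rewrite mulf_neq0 ?invr_eq0 ?gt_eqF.
have -> : 16 / eps ^+ 2 = t ^+ 2 by rewrite expr_div_n -natrX.
have -> : eps / 4 = t^-1 by rewrite invf_div.
have MT : M^T = Q *m P by rewrite trmx_mul P_sym Q_sym.
have -> : P *m C *m P = M *m M^T by rewrite MT -QQ !mulmxA.
have -> : Q *m D *m Q = M^T *m M by rewrite MT -PP !mulmxA.
have t2_ge0 : 0 <= t ^+ 2 by rewrite sqr_ge0.
have [/spd_1D/spd_unitmx Y1_unit YY] := sqrtm_spec (spd_1DZ_mulmx_tr M^T t2_ge0).
rewrite trmxK in Y1_unit YY; set Y := sqrtm _ in Y1_unit YY *.
apply: (conj_mulmx_inj Q_unit); transitivity (t^-1 *: (Y - 1%:M)) => /=.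
  set X := sqrtm _; rewrite -scalemxAr -scalemxAl.
  have -> : Q *m (P *m invmx (1%:M + X) *m P) *m Q = M^T *m (invmx (1%:M + X) *m M).
    by rewrite MT /M !mulmxA.
  rewrite /X invmx_1D_sqrtm_push_through // mulmxA.
  by rewrite -(mulmx_invmx_1D_of_sqr YY Y1_unit) -scalemxAl scalerA expr2 mulKf.
rewrite mulmxBr mulmxBl mulmx1 QQ -scalemxAr -scalemxAl !mulmxA mulmxV // mul1mx mulmxKV //.
rewrite !scalerDr !scalerN scalerA mulVf // scale1r.
set a := t^-1 *: 1%:M; set b := t^-1 *: Y.
by rewrite [a + C]addrC -addrA opprD addrA subrr add0r opprB.
Qed.
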